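(* Identify $S^1$ with $[0,1]/(0\sim1)$. Let $f:S^1\multimap S^1$ be given by $f(x)=\{0,\tfrac12\}$ for $x\notin[\tfrac13,\tfrac23]$ and $f(x)=\{0,\tfrac12,\tfrac{3x-1}{2}\}$ for $x\in[\tfrac13,\tfrac23]$. Then $f$ is a (lower and upper semicontinuous) at-most-3-valued map, but there is no function $w:S^1\times S^1\to\mathbb{N}$ such that $(f,w)$ is an $\mathbb{N}$-weighted map.
   Context: A weighted map from $X$ to $Y$ is a pair $\psi=(n_\psi,w_\psi)$ where (1) $n_\psi:X\multimap Y$ is an upper semicontinuous multivalued map with $n_\psi(x)$ a finite subset of $Y$ for all $x$; (2) $w_\psi:X\times Y\to\mathbb{N}$ is a function such that (i) $w_\psi(x,y)=0$ whenever $y\notin n_\psi(x)$, and (ii) for every open $U\subseteq Y$ and $x\in X$ with $n_\psi(x)\cap\partial U=\emptyset$ there is an open neighborhood $V$ of $x$ with $\sum_{y\in U}w_\psi(x,y)=\sum_{y\in U}w_\psi(z,y)$ for all $z\in V$. It is an $\mathbb{N}$-weighted map if moreover $w_\psi(x,y)>0$ for all $x\in X$ and $y\in n_\psi(x)$. An at-most-$n$-valued map is a lower and upper semicontinuous multivalued map whose values are nonempty sets of cardinality at most $n$. *)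

From HB Require Import structures.
From mathcomp Require Import all_boot all_order all_algebra.
From mathcomp Require Import all_classical all_reals all_analysis.
From mathcomp Require Import generic_quotient.
Set Implicit Arguments. Unset Strict Implicit. Unset Printing Implicit Defensive.
Import Order.TTheory GRing.Theory Num.Theory.
Import numFieldNormedType.Exports.
Local Open Scope classical_set_scope.
Local Open Scope ring_scope.

Definition usc_mmap {X Y : topologicalType} (F : X -> set Y) : Prop :=
  forall (x : X) (U : set Y), open U -> F x `<=` U ->
    exists V : set X, [/\ open V, V x & forall z, V z -> F z `<=` U].

Definition lsc_mmap {X Y : topologicalType} (F : X -> set Y) : Prop :=
  forall (x : X) (U : set Y), open U -> F x `&` U !=set0 ->
    exists V : set X, [/\ open V, V x & forall z, V z -> F z `&` U !=set0].

Definition at_most_n_valued {X Y : topologicalType} (n : nat) (F : X -> set Y) : Prop :=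
  [/\ lsc_mmap F, usc_mmap F &
      forall x, F x !=set0 /\
        exists s : seq Y, (size s <= n)%N /\ F x = [set y | y \in s]].

Definition boundary {Y : topologicalType} (U : set Y) : set Y :=
  closure U `\` interior U.

Definition weighted_map {X Y : topologicalType} (n : X -> set Y) (w : X -> Y -> nat) : Prop :=
  [/\ usc_mmap n,
      (forall x, finite_set (n x)),
      (forall x y, ~ n x y -> w x y = 0%N) &
      (forall (U : set Y) (x : X), open U -> n x `&` boundary U = set0 ->
         exists V : set X, [/\ open V, V x &
           forall z, V z -> \sum_(y \in U) w x y = \sum_(y \in U) w z y])].

Definition N_weighted_map {X Y : topologicalType} (n : X -> set Y) (w : X -> Y -> nat) : Prop :=
  weighted_map n w /\ (forall x y, n x y -> (0 < w x y)%N).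

Section Circle.
Variable R : realType.

Definition I01 : Type := set_type (`[0, 1]%classic : set R).
HB.instance Definition _ := Topological.copy I01 (set_type (`[0, 1]%classic : set R)).

Definition endpt (x : I01) : bool := (sval x == 0) || (sval x == 1).

Definition circ_rel (x y : I01) : bool := (x == y) || (endpt x && endpt y).

Lemma circ_rel_refl : reflexive circ_rel.
Proof. by move=> x; rewrite /circ_rel eqxx. Qed.

Lemma circ_rel_sym : symmetric circ_rel.
Proof. by move=> x y; rewrite /circ_rel eq_sym andbC. Qed.

Lemma circ_rel_trans : transitive circ_rel.
Proof.
move=> y x z; rewrite /circ_rel.
case/orP=> [/eqP -> //|/andP [ex ey]].
case/orP=> [/eqP <-|/andP [_ ez]]; first by rewrite ex ey orbT.
by rewrite ex ez orbT.
Qed.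

Definition circ_equiv := EquivRel circ_rel circ_rel_refl circ_rel_sym circ_rel_trans.

Definition S1 : Type := quotient_topology {eq_quot circ_equiv}%qT.
HB.instance Definition _ := Topological.copy S1 (quotient_topology {eq_quot circ_equiv}%qT).

Definition piS1 (t : I01) : S1 := (\pi_(quotient_topology {eq_quot circ_equiv}%qT))%qT t.

End Circle.

Definition circle_f (R : realType) (x : S1 R) : set (S1 R) :=
  [set y | (exists u : I01 R, sval u = 0 /\ y = piS1 u)
        \/ (exists u : I01 R, sval u = 2^-1 /\ y = piS1 u)
        \/ (exists s u : I01 R, [/\ 3^-1 <= sval s <= 2 / 3, x = piS1 s,
                                   sval u = (3 * sval s - 1) / 2 & y = piS1 u])].

(* Along the arc x in [0, 1] the value branch x of f climbs continuously from the
   point 0 (for x <= 1/3) to the point 1/2 (for x >= 2/3), while the constant values 0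
   and 1/2 persist.  If w were an N-weighting of f, the weight carried into an open set
   U whose boundary avoids f(x) would be constant along x.  Taking for U a small arc
   around 1/2 on x in [0, 1/2], a small arc around 0 on x in [1/2, 1] (which closes up
   at x = 1 ~ 0), and the whole circle on x in [0, 1/2], one gets
     w(1/2, 1/2) = w(0, 1/2),  w(1/2, 0) = w(0, 0),
     w(0, 0) + w(0, 1/2) = w(1/2, 0) + w(1/2, 1/2) + w(1/2, 1/4),
   so the new value 1/4 = branch (1/2) gets weight 0. *)

From HB Require Import structures.
From mathcomp Require Import all_boot all_order all_algebra.
From mathcomp Require Import all_classical all_reals all_analysis.
From mathcomp Require Import generic_quotient.
From mathcomp Require Import lra zify.
Set Implicit Arguments. Unset Strict Implicit. Unset Printing Implicit Defensive.
Import Order.TTheory GRing.Theory Num.Theory.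
Import numFieldNormedType.Exports.
Local Open Scope classical_set_scope.
Local Open Scope ring_scope.

Lemma notin_boundary_of_disjoint {T : topologicalType} (U V : set T) (y : T) :
  open U -> open V -> U `&` V = set0 -> (U `|` V) y -> ~ boundary U y.
Proof.
move=> oU oV UV0 [Uy|Vy] [clU intU].
  by apply: intU; rewrite (proj1 (interior_id _) oU).
have [z [Uz Vz]] := clU V (open_nbhs_nbhs (conj oV Vy)).
by have : (U `&` V) z by []; rewrite UV0.
Qed.

Lemma fsbig_seq_support (T : choiceType) (M : nmodType) (U : set T) (f : T -> M)
    (r : seq T) :
  uniq r -> (forall y, y \notin r -> f y = 0) ->
  \sum_(y \in U) f y = \sum_(y <- r | `[< U y >]) f y.
Proof.
move=> ur fr.
rewrite -(fsbig_widen (U `&` [set` r]) U f); first last.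
- by move=> y [Uy /not_andP [//|/= /negP/fr]].
- by move=> y [].
rewrite (fsbig_fwiden [seq y <- r | `[< U y >]] (U `&` [set` r]) f).
- by rewrite big_filter.
- by move=> y [Uy /= yr]; rewrite mem_filter yr andbT; apply/asboolP.
- exact: filter_uniq.
- by move=> y [/=]; rewrite mem_filter => /andP[/asboolP Uy yr] [].
Qed.

Lemma itv_locally_constant (R : realType) (T : eqType) (g : R -> T) (a b : R) :
  a <= b ->
  (forall t, a <= t <= b -> exists2 d : R, 0 < d &
     forall u, a <= u <= b -> `|u - t| < d -> g u = g t) ->
  g a = g b.
Proof.
move=> ab gloc; pose h t : R := (g t != g a)%:R.
(* h only takes the values 0 and 1, so the IVT forbids a jump between them. *)
have hcont : {within `[a, b], continuous h}.
  rewrite continuous_subspace_in => x xab; apply: cvg_near_cst.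
  rewrite /prop_near1 /nbhs /= -nbhs_subspace_in; last by move: xab; rewrite inE.
  have [d d0 gd] : exists2 d : R, 0 < d &
      forall u, a <= u <= b -> `|u - x| < d -> g u = g x.
    by apply: gloc; move: xab; rewrite inE /= in_itv.
  apply/nbhs_ballP; exists d => //= y; rewrite /ball /= in_itv /= => xy yab.
  by rewrite /from_subspace /h gd // distrC.
case: (eqVneq (g a) (g b)) => // gab; exfalso.
have [|c _] := IVT (v := 2^-1) ab hcont.
  by rewrite /h eqxx eq_sym gab /= min_l ?max_r //=; lra.
by rewrite /h; case: (_ != _) => /=; lra.
Qed.

Section Circle.
Variable R : realType.
Implicit Types (s t u : I01 R) (x y z : S1 R).

Lemma I01_bounds s : 0 <= sval s <= 1.
Proof. by case: s => /= r /set_mem; rewrite /= in_itv. Qed.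

Lemma I01_val_inj s t : sval s = sval t -> s = t.
Proof. by move=> st; apply: eq_sig_hprop. Qed.

Definition clamp01 (r : R) : R := Num.max 0 (Num.min r 1).

Lemma clamp01_in (r : R) : clamp01 r \in (`[0, 1]%classic : set R).
Proof.
apply/mem_set; rewrite /= in_itv /= /clamp01 le_max lexx /=.
by rewrite ge_max ler01 ge_min lexx orbT.
Qed.

(* Clamped, so that pt below is total; only its values on [0, 1] matter. *)
Definition toI01 (r : R) : I01 R := exist _ (clamp01 r) (clamp01_in r).

Lemma sval_toI01 (r : R) : 0 <= r <= 1 -> sval (toI01 r) = r.
Proof. by move=> /andP[r0 r1]; rewrite /= /clamp01 min_l // max_r. Qed.

Lemma toI01_sval s : toI01 (sval s) = s.
Proof. by apply: I01_val_inj; rewrite sval_toI01 // I01_bounds. Qed.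

Definition pt (r : R) : S1 R := piS1 (toI01 r).

Lemma pt_sval s : pt (sval s) = piS1 s.
Proof. by rewrite /pt toI01_sval. Qed.

Lemma piS1P s t : piS1 s = piS1 t ->
  s = t \/ ((sval s = 0 \/ sval s = 1) /\ (sval t = 0 \/ sval t = 1)).
Proof.
move=> /(@eqquotP _ (circ_equiv R) (quotient_topology {eq_quot (circ_equiv R)}%qT)).
rewrite /= /circ_rel /endpt => /orP[/eqP ->|/andP[/orP[]/eqP s_ /orP[]/eqP t_]]; tauto.
Qed.

Lemma piS1_surj x : exists s, x = piS1 s.
Proof. by exists (repr x); rewrite /piS1 reprK. Qed.

Lemma pt1 : pt 1 = pt 0.
Proof.
rewrite /pt /piS1; apply/(@eqquotP _ (circ_equiv R) _).
by rewrite /= /circ_rel /endpt !sval_toI01 ?lexx ?ler01 // eqxx oner_eq0 /= eqxx orbT.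
Qed.

Lemma pt_inj (r r' : R) : 0 < r -> r < 1 -> 0 <= r' <= 1 -> pt r = pt r' -> r = r'.
Proof.
move=> r0 r1 r'01; have r01 : 0 <= r <= 1 by lra.
by case/piS1P => [/(congr1 sval)|[]]; rewrite !sval_toI01 //; lra.
Qed.

Lemma open_I01P (A : set (I01 R)) : open A <->
  forall s, A s -> exists2 d : R, 0 < d & forall u, `|sval u - sval s| < d -> A u.
Proof.
split=> [[B oB <-] s /= Bs|Aball].
  have /nbhs_ballP[e e0 eB] : nbhs (sval s) B by apply: open_nbhs_nbhs.
  by exists e => // u su; apply: eB; rewrite /ball /= distrC.
exists [set r | exists s d, [/\ A s, 0 < d,
  (forall u, `|sval u - sval s| < d -> A u) & `|r - sval s| < d]].
  rewrite openE => r [s [d [As d0 sd rs]]].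
  apply/nbhs_ballP; exists (d - `|r - sval s|); first by rewrite /= subr_gt0.
  move=> y; rewrite /ball /= => ry; exists s, d; split => //.
  by rewrite -(subrK r y) -addrA (le_lt_trans (ler_normD _ _)) // distrC -ltrBrDr.
apply/seteqP; split => u /=; first by move=> [s [d [_ _ sd us]]]; apply: sd.
move=> Au; have [d d0 ud] := Aball u Au.
by exists u, d; split => //; rewrite subrr normr0.
Qed.

Lemma open_S1P (V : set (S1 R)) : open V <->
  forall s, V (piS1 s) -> exists2 d : R, 0 < d &
    forall u, `|sval u - sval s| < d -> V (piS1 u).
Proof. exact: (@open_I01P (@piS1 R @^-1` V)). Qed.

(* The image of Q in the circle; it is saturated, hence open when Q is, as soon as
   Q contains both endpoints or neither. *)
Definition arc (Q : set R) : set (S1 R) := [set z | exists s, z = piS1 s /\ Q (sval s)].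

Section Arc.
Variable Q : set R.
Hypothesis Q01 : Q 0 <-> Q 1.

Lemma arc_piS1 s : arc Q (piS1 s) <-> Q (sval s).
Proof.
split=> [[t [/piS1P[->//|[[]s_ []t_]] Qt]]|Qs]; last by exists s.
all: by rewrite s_; rewrite t_ in Qt; tauto.
Qed.

Lemma arc_pt (r : R) : 0 <= r <= 1 -> arc Q (pt r) <-> Q r.
Proof. by move=> r01; rewrite /pt arc_piS1 sval_toI01. Qed.

Lemma open_arc : open Q -> open (arc Q).
Proof. by move=> oQ; exists Q => //; apply/seteqP; split=> s /arc_piS1. Qed.

End Arc.

Definition branch (r : R) : R := Num.max 0 (Num.min ((3 * r - 1) / 2) 2^-1).

Lemma branchP r : [\/ r <= 3^-1 /\ branch r = 0,
   3^-1 <= r <= 2/3 /\ branch r = (3 * r - 1) / 2 | 2/3 <= r /\ branch r = 2^-1].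
Proof.
rewrite /branch; case: (lerP r 3^-1) => r1.
  by apply: Or31; rewrite min_l ?max_l; lra.
case: (lerP r (2/3)) => r2.
  by apply: Or32; rewrite min_l ?max_r; try split; lra.
by apply: Or33; rewrite min_r ?max_r; try split; lra.
Qed.

Lemma branch_bounds r : 0 <= branch r <= 2^-1.
Proof. by case: (branchP r) => -[r_ ->]; lra. Qed.

Lemma branch_lipschitz r r' : `|branch r - branch r'| <= 3/2 * `|r - r'|.
Proof.
have := ler_norm (r - r'); have := ler_norm (r' - r); rewrite distrC ler_norml.
by case: (branchP r) => -[r_ ->]; case: (branchP r') => -[r'_ ->]; lra.
Qed.

Lemma pt_branch_near (U : set (S1 R)) s : open U -> U (pt (branch (sval s))) ->
  exists2 d : R, 0 < d & forall u, `|sval u - sval s| < d -> U (pt (branch (sval u))).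
Proof.
move=> /open_S1P oU /oU[d d0 Ud]; exists (d / 2); first lra.
move=> u us; have := Ud (toI01 (branch (sval u))).
have bnd r : 0 <= branch r <= 1 by have := branch_bounds r; lra.
rewrite !sval_toI01 //; apply; apply: (le_lt_trans (branch_lipschitz _ _)).
have := normr_ge0 (sval u - sval s); lra.
Qed.

Lemma circle_fP s y : circle_f (piS1 s) y <->
  [\/ y = pt 0, y = pt 2^-1 | y = pt (branch (sval s))].
Proof.
have pt_val (r : R) : 0 <= r <= 1 -> exists u : I01 R, sval u = r /\ pt r = piS1 u.
  by move=> r01; exists (toI01 r); rewrite sval_toI01.
have [[u0 [u0_ pt0]] [uh [uh_ pth]]] : (exists u, sval u = 0 /\ pt 0 = piS1 u) /\
    (exists u, sval u = 2^-1 /\ pt 2^-1 = piS1 u) by split; apply: pt_val; lra.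
split.
  case=> [[u [u_ ->]]|[[u [u_ ->]]|[s' [u [s'_ /piS1P ss' u_ ->]]]]].
  - by apply: Or31; rewrite pt0; congr piS1; apply: I01_val_inj; rewrite u_ u0_.
  - by apply: Or32; rewrite pth; congr piS1; apply: I01_val_inj; rewrite u_ uh_.
  have {ss'} ss' : s = s'.
    by case: ss' => [//|[_ [] s'_01]]; exfalso; move: s'_; rewrite s'_01; lra.
  apply: Or33; rewrite -pt_sval u_ ss'.
  by case: (branchP (sval s')) => -[s_ ->] //; congr pt; lra.
case=> ->; [by left; exists u0 | by right; left; exists uh |].
case: (branchP (sval s)) => -[s_ ->]; [by left; exists u0| |by right; left; exists uh].
right; right; exists s, (toI01 ((3 * sval s - 1) / 2)); rewrite sval_toI01 //.
lra.
Qed.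

Lemma circle_f_ptP (r : R) y : 0 <= r <= 1 ->
  circle_f (pt r) y <-> [\/ y = pt 0, y = pt 2^-1 | y = pt (branch r)].
Proof. by move=> r01; rewrite /pt circle_fP sval_toI01. Qed.

Lemma circle_f_lsc : lsc_mmap (@circle_f R).
Proof.
move=> x; have [s ->] := piS1_surj x; move=> U oU [y [fy Uy]].
exists [set z | circle_f z `&` U !=set0]; split => //; last by exists y.
apply/open_S1P => t [y' [/circle_fP[->|->|->] Uy']].
- by exists 1 => // u _; exists (pt 0); split => //; apply/circle_fP; apply: Or31.
- by exists 1 => // u _; exists (pt 2^-1); split => //; apply/circle_fP; apply: Or32.
- have [d d0 Ud] := pt_branch_near oU Uy'.
  exists d => // u ut; exists (pt (branch (sval u))); split; last exact: Ud.
  by apply/circle_fP; apply: Or33.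
Qed.

Lemma circle_f_usc : usc_mmap (@circle_f R).
Proof.
move=> x; have [s ->] := piS1_surj x; move=> U oU fsU.
exists [set z | circle_f z `<=` U]; split => //.
apply/open_S1P => t ftU.
have [d d0 Ud] := pt_branch_near oU (ftU _ ((circle_fP t _).2 (Or33 _ _ erefl))).
exists d => // u ut y /circle_fP[->|->|->]; last exact: Ud.
  by apply: ftU; apply/circle_fP; apply: Or31.
by apply: ftU; apply/circle_fP; apply: Or32.
Qed.

Lemma circle_f_at_most_3_valued : at_most_n_valued 3 (@circle_f R).
Proof.
split; [exact: circle_f_lsc | exact: circle_f_usc |] => x.
have [s ->] := piS1_surj x; split; first by exists (pt 0); apply/circle_fP; apply: Or31.
exists [:: pt 0; pt 2^-1; pt (branch (sval s))]; split => //.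
apply/seteqP; split => y /=.
  by move/circle_fP => [->|->|->]; rewrite !inE eqxx ?orbT.
by rewrite !inE => /or3P[]/eqP->; apply/circle_fP; [apply: Or31|apply: Or32|apply: Or33].
Qed.

Section SeparatedArcs.
Variables Q Q' : set R.
Hypotheses (Q01 : Q 0 <-> Q 1) (Q'01 : Q' 0 <-> Q' 1).
Hypotheses (oQ : open Q) (oQ' : open Q') (QQ' : forall r, Q r -> ~ Q' r).

Lemma arc_notin_boundary r : 0 <= r <= 1 -> (Q `|` Q') r -> ~ boundary (arc Q) (pt r).
Proof.
move=> r01 QQ'r; apply: (notin_boundary_of_disjoint (open_arc Q01 oQ) (open_arc Q'01 oQ')).
  apply/seteqP; split=> // z [[s [-> Qs]] /(arc_piS1 Q'01)].
  exact: QQ'.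
by case: QQ'r => [/(arc_pt Q01 r01)|/(arc_pt Q'01 r01)]; [left|right].
Qed.

Lemma circle_f_arc_boundary r : 0 <= r <= 1 ->
  (Q `|` Q') 0 -> (Q `|` Q') 2^-1 -> (Q `|` Q') (branch r) ->
  circle_f (pt r) `&` boundary (arc Q) = set0.
Proof.
move=> r01 Q0 Qh Qr; apply/seteqP; split=> // y [/(circle_f_ptP _ r01)[]-> ].
- by apply: arc_notin_boundary => //; lra.
- by apply: arc_notin_boundary => //; lra.
- by apply: arc_notin_boundary => //; have := branch_bounds r; lra.
Qed.

End SeparatedArcs.

Lemma branch0 : branch 0 = 0.
Proof. by case: (branchP 0) => -[? ->] //; lra. Qed.

Lemma branch_half : branch 2^-1 = 4^-1.
Proof. by case: (branchP 2^-1) => -[? ->]; lra. Qed.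

Lemma pt_neq (r r' : R) : 0 < r -> r < 1 -> 0 <= r' -> r' <= 1 -> r != r' ->
  pt r != pt r'.
Proof. by move=> r0 r1 r'0 r'1; apply/contra_neq/pt_inj => //; apply/andP. Qed.

Section Weights.
Variable w : S1 R -> S1 R -> nat.
Hypothesis w_supp : forall x y, ~ circle_f x y -> w x y = 0%N.
Hypothesis w_loc : forall (U : set (S1 R)) (x : S1 R), open U ->
  circle_f x `&` boundary U = set0 ->
  exists V : set (S1 R), [/\ open V, V x &
    forall z, V z -> \sum_(y \in U) w x y = \sum_(y \in U) w z y].

Lemma wsum_itv_eq (U : set (S1 R)) (a b : R) : open U -> 0 <= a -> a <= b -> b <= 1 ->
  (forall r, a <= r <= b -> circle_f (pt r) `&` boundary U = set0) ->
  \sum_(y \in U) w (pt a) y = \sum_(y \in U) w (pt b) y.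
Proof.
move=> oU a0 ab b1 Ufree.
apply: (itv_locally_constant (g := fun r => \sum_(y \in U) w (pt r) y)) => // r rab.
have [V [oV Vr Vw]] := w_loc oU (Ufree r rab).
have [d d0 Vd] := (open_S1P V).1 oV (toI01 r) Vr.
exists d => // r' r'ab r'r; apply/esym/Vw.
by have := Vd (toI01 r'); rewrite !sval_toI01 //; [apply | lra | lra].
Qed.

Lemma wsum_pt0 (U : set (S1 R)) :
  \sum_(y \in U) w (pt 0) y = \sum_(y <- [:: pt 0; pt 2^-1] | `[< U y >]) w (pt 0) y.
Proof.
apply: fsbig_seq_support => [|y].
  by rewrite /= inE andbT eq_sym (@pt_neq 2^-1 0) //; lra.
rewrite !inE negb_or => /andP[/eqP y0 /eqP yh]; apply: w_supp.
by move=> /circle_f_ptP; rewrite branch0; case; [lra | exact: y0 | exact: yh | exact: y0].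
Qed.

Lemma wsum_pt_half (U : set (S1 R)) :
  \sum_(y \in U) w (pt 2^-1) y =
  \sum_(y <- [:: pt 0; pt 2^-1; pt 4^-1] | `[< U y >]) w (pt 2^-1) y.
Proof.
apply: fsbig_seq_support => [|y].
  rewrite /= !inE !negb_or !andbT ![pt 0 == _]eq_sym.
  by rewrite (@pt_neq 2^-1 0) ?(@pt_neq 4^-1 0) ?(@pt_neq 2^-1 4^-1) //;
    first [lra | apply/eqP; lra].
rewrite !inE !negb_or => /and3P[/eqP y0 /eqP yh /eqP yq]; apply: w_supp.
by move=> /circle_f_ptP; rewrite branch_half; case; [lra | exact: y0 | exact: yh | exact: yq].
Qed.

Lemma wsum_arc_itv_eq (Q Q' : set R) (a b : R) :
  (Q 0 <-> Q 1) -> (Q' 0 <-> Q' 1) -> open Q -> open Q' -> (forall r, Q r -> ~ Q' r) ->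
  0 <= a -> a <= b -> b <= 1 -> (Q `|` Q') 0 -> (Q `|` Q') 2^-1 ->
  (forall r, a <= r <= b -> (Q `|` Q') (branch r)) ->
  \sum_(y \in arc Q) w (pt a) y = \sum_(y \in arc Q) w (pt b) y.
Proof.
move=> Q01 Q'01 oQ oQ' QQ' a0 ab b1 Q0 Qh Qbr.
apply: (wsum_itv_eq (open_arc Q01 oQ)) => // r rab.
by apply: (circle_f_arc_boundary Q01 Q'01 oQ oQ' QQ') => //; [lra | exact: Qbr].
Qed.

Lemma asbool_arc_pt (Q : set R) r : (Q 0 <-> Q 1) -> 0 <= r <= 1 ->
  `[< arc Q (pt r) >] = `[< Q r >].
Proof. by move=> Q01 r01; exact/asbool_equiv_eq/arc_pt. Qed.

Lemma wsum_arc_pt0 (Q : set R) : (Q 0 <-> Q 1) ->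
  \sum_(y \in arc Q) w (pt 0) y = \sum_(r <- [:: 0; 2^-1] | `[< Q r >]) w (pt 0) (pt r).
Proof.
move=> Q01; rewrite wsum_pt0 !big_cons !big_nil.
by rewrite !asbool_arc_pt //; lra.
Qed.

Lemma wsum_arc_pt_half (Q : set R) : (Q 0 <-> Q 1) ->
  \sum_(y \in arc Q) w (pt 2^-1) y =
  \sum_(r <- [:: 0; 2^-1; 4^-1] | `[< Q r >]) w (pt 2^-1) (pt r).
Proof.
move=> Q01; rewrite wsum_pt_half !big_cons !big_nil.
by rewrite !asbool_arc_pt //; lra.
Qed.

Ltac asbool_lra := repeat first
  [ rewrite asboolT; last by done || (rewrite /=; lra)
  | rewrite asboolF; last by rewrite /=; lra ].

Lemma weight_pt0_stable : w (pt 2^-1) (pt 0) = w (pt 0) (pt 0).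
Proof.
(* Q' separates 1/2 and branch x in [1/4, 1/2], for x in [1/2, 1], from the arc Q around 0. *)
pose Q := [set r : R | r < 10^-1 \/ 9/10 < r].
pose Q' := [set r : R | 1/5 < r /\ r < 3/5].
have Q01 : Q 0 <-> Q 1 by rewrite /Q /=; split=> _; lra.
have Q'01 : Q' 0 <-> Q' 1 by rewrite /Q' /=; split=> -[]; lra.
have QQ' r : Q r -> ~ Q' r by rewrite /Q /Q' /=; lra.
have := @wsum_arc_itv_eq Q Q' 2^-1 1 Q01 Q'01
  (openU (@open_lt R _) (@open_gt R _)) (openI (@open_gt R _) (@open_lt R _)) QQ'.
rewrite pt1 wsum_arc_pt0 // wsum_arc_pt_half // !big_cons !big_nil /Q /Q' /=.
asbool_lra; rewrite !addr0 => E; apply: E => [||||| r r_]; [lra .. |].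
by case: (branchP r) => -[? ->]; lra.
Qed.

Lemma weight_half_stable : w (pt 0) (pt 2^-1) = w (pt 2^-1) (pt 2^-1).
Proof.
(* Q' separates 0 and branch x in [0, 1/4], for x in [0, 1/2], from the arc Q around 1/2. *)
pose Q := [set r : R | 2/5 < r /\ r < 3/5].
pose Q' := [set r : R | r < 3/10 \/ 7/10 < r].
have Q01 : Q 0 <-> Q 1 by rewrite /Q /=; split=> -[]; lra.
have Q'01 : Q' 0 <-> Q' 1 by rewrite /Q' /=; split=> _; lra.
have QQ' r : Q r -> ~ Q' r by rewrite /Q /Q' /=; lra.
have := @wsum_arc_itv_eq Q Q' 0 2^-1 Q01 Q'01
  (openI (@open_gt R _) (@open_lt R _)) (openU (@open_lt R _) (@open_gt R _)) QQ'.
rewrite wsum_arc_pt0 // wsum_arc_pt_half // !big_cons !big_nil /Q /Q' /=.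
asbool_lra; rewrite !addr0 => E; apply: E => [||||| r r_]; [lra .. |].
by case: (branchP r) => -[? ->]; lra.
Qed.

Lemma weight_total_stable :
  (w (pt 0) (pt 0) + w (pt 0) (pt 2^-1) =
   w (pt 2^-1) (pt 0) + w (pt 2^-1) (pt 2^-1) + w (pt 2^-1) (pt 4^-1))%N.
Proof.
have := @wsum_arc_itv_eq setT set0 0 2^-1 (iff_refl _) (iff_refl _) openT open0
  (fun _ _ => id).
rewrite wsum_arc_pt0 // wsum_arc_pt_half // !big_cons !big_nil.
asbool_lra; rewrite !addr0 addrA => E.
by apply: E => [||||| r _]; [lra | lra | lra | left | left | left].
Qed.

Lemma weight_quarter_at_half : w (pt 2^-1) (pt 4^-1) = 0%N.
Proof.
by have := weight_total_stable; rewrite weight_pt0_stable weight_half_stable; lia.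
Qed.

End Weights.

Lemma circle_f_not_N_weighted :
  ~ exists w : S1 R -> S1 R -> nat, N_weighted_map (@circle_f R) w.
Proof.
move=> [w [[_ _ w_supp w_loc] w_pos]].
suff : (0 < w (pt 2^-1) (pt 4^-1))%N by rewrite (weight_quarter_at_half w_supp w_loc).
by apply/w_pos/circle_f_ptP; [lra | rewrite branch_half; apply: Or33].
Qed.

End Circle.

Theorem mainTheorem13 (R : realType) :
  at_most_n_valued 3 (@circle_f R) /\
  ~ (exists w : S1 R -> S1 R -> nat, N_weighted_map (@circle_f R) w).
Proof. by split; [exact: circle_f_at_most_3_valued | exact: circle_f_not_N_weighted]. Qed.
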